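(* There exists a finite graph $G$ which is $P_{6}$-induced-saturated.
   Context: $P_n$ denotes the path on $n$ vertices. A (simple) graph $G$ is called $H$-induced-saturated if (i) $G$ does not contain an induced subgraph isomorphic to $H$; (ii) for every edge $e\in E(G)$, the graph $G-e$ obtained by deleting $e$ contains an induced subgraph isomorphic to $H$; and (iii) for every pair $\{x,y\}$ of distinct non-adjacent vertices of $G$, the graph $G+xy$ obtained by adding the edge $xy$ contains an induced subgraph isomorphic to $H$. *)

From mathcomp Require Import all_boot.
Set Implicit Arguments. Unset Strict Implicit. Unset Printing Implicit Defensive.

Definition simple_graph (T : finType) (e : rel T) : Prop :=
  irreflexive e /\ symmetric e.

Definition path_graph (n : nat) : rel 'I_n :=
  fun i j => (i.+1 == j :> nat) || (j.+1 == i :> nat).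

Definition has_induced (k : nat) (h : rel 'I_k) (T : finType) (e : rel T) : Prop :=
  exists f : 'I_k -> T, injective f /\ forall i j, e (f i) (f j) = h i j.

Definition del_edge (T : finType) (e : rel T) (x y : T) : rel T :=
  fun u v => e u v && ~~ (((u == x) && (v == y)) || ((u == y) && (v == x))).

Definition add_edge (T : finType) (e : rel T) (x y : T) : rel T :=
  fun u v => [|| e u v, (u == x) && (v == y) | (u == y) && (v == x)].

Definition induced_saturated (k : nat) (h : rel 'I_k) (T : finType) (e : rel T) : Prop :=
  [/\ ~ has_induced h e,
      (forall x y, e x y -> has_induced h (del_edge e x y)) &
      (forall x y, x != y -> ~~ e x y -> has_induced h (add_edge e x y))].
Arguments path_graph n : clear implicits.

(* The witness is the circulant graph on Z_20 with connection set
   {±1, ±3, ±4, ±7, ±9}.  That it has no induced P6 and that every deletion or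
   addition of an edge creates one are finite facts, decided by a verified
   backtracking search for induced embeddings.  Translations of Z_20 are
   automorphisms, and deleting or adding the edge xy is symmetric in x and y,
   so every pair {x, y} can be moved to {0, d} with 1 <= d <= 10: only ten
   saturation instances need to be searched. *)

From mathcomp Require Import all_boot ssralg zmodp zify.
Set Implicit Arguments. Unset Strict Implicit. Unset Printing Implicit Defensive.
Import GRing.Theory.

Section InducedSearch.

Variables (k : nat) (h : rel 'I_k.+1) (T : finType) (e : rel T).

(* Pattern indices are taken modulo k.+1; only indices <= k are ever used. *)
Definition h_nat (i j : nat) : bool := h (inZp i) (inZp j).

Definition partial_embedding (s : seq T) : Prop :=
  uniq s /\ forall x0 i j, i < size s -> j < size s ->
    e (nth x0 s i) (nth x0 s j) = h_nat i j.

Definition extendable (s : seq T) (v : T) : bool :=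
  let m := size s in
  [&& v \notin s, e v v == h_nat m m &
      all (fun i => (e (nth v s i) v == h_nat i m) && (e v (nth v s i) == h_nat m i))
          (iota 0 m)].

Lemma partial_embedding_nil : partial_embedding [::].
Proof. by split. Qed.

Lemma partial_embedding_rcons s v :
  partial_embedding (rcons s v) <-> partial_embedding s /\ extendable s v.
Proof.
rewrite /partial_embedding /extendable rcons_uniq size_rcons.
set m := size s.
have nth_s x0 i : i < m -> nth x0 (rcons s v) i = nth x0 s i.
  by move=> lt_im; rewrite nth_rcons lt_im.
have nth_v x0 : nth x0 (rcons s v) m = v by rewrite nth_rcons ltnn eqxx.
split=> [[/andP[v_notin_s uniq_s] E] | [[uniq_s E] /and3P[v_notin_s /eqP Evv /allP Eall]]].
  have Ev i j : i <= m -> j <= m ->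
      e (nth v (rcons s v) i) (nth v (rcons s v) j) = h_nat i j.
    by move=> le_im le_jm; apply: E; rewrite ltnS.
  split; first split=> // [x0 i j lt_im lt_jm].
    by rewrite -!(nth_s x0) // E // ltnS ltnW.
  have := Ev m m; rewrite nth_v v_notin_s => -> //=; rewrite eqxx /=.
  apply/allP=> i; rewrite mem_iota => /andP[_ lt_im].
  have le_im := ltnW lt_im.
  by have := Ev i m; have := Ev m i; rewrite nth_v nth_s // => -> // -> //; rewrite !eqxx.
split; first by rewrite v_notin_s.
move=> x0 i j; rewrite !ltnS.
case: (ltngtP i m) => [lt_im | // | ->] _; case: (ltngtP j m) => [lt_jm | // | ->] _;
  rewrite ?nth_v ?nth_s //.
- exact: E.
- have := Eall i; rewrite mem_iota lt_im => /(_ isT) /andP[/eqP + _].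
  by rewrite (set_nth_default v).
- have := Eall j; rewrite mem_iota lt_jm => /(_ isT) /andP[_ /eqP].
  by rewrite (set_nth_default v).
Qed.

Lemma partial_embedding_catl s t :
  partial_embedding (s ++ t) -> partial_embedding s.
Proof.
rewrite /partial_embedding cat_uniq size_cat => -[/andP[uniq_s _] E].
split=> // x0 i j lt_is lt_js.
by have := E x0 i j; rewrite !nth_cat lt_is lt_js; apply; apply: ltn_addr.
Qed.

Lemma has_induced_embeddingP :
  has_induced h e <-> exists2 s, size s = k.+1 & partial_embedding s.
Proof.
split=> [[f [inj_f Ef]] | [s size_s [uniq_s E]]].
  have nth_enum i : i < k.+1 -> nth ord0 (enum 'I_k.+1) i = inZp i.
    by move=> lt_ik; apply: val_inj; rewrite /= nth_enum_ord // modn_small.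
  exists [seq f i | i <- enum 'I_k.+1]; first by rewrite size_map size_enum_ord.
  split; first by rewrite map_inj_uniq ?enum_uniq.
  move=> x0 i j; rewrite size_map size_enum_ord => lt_ik lt_jk.
  by rewrite !(nth_map ord0) -?enumT ?size_enum_ord // !nth_enum // Ef.
case: s size_s uniq_s E => [//|x0 s] size_s uniq_s E.
exists (fun i : 'I_k.+1 => nth x0 (x0 :: s) i); split.
  move=> i j /eqP; rewrite nth_uniq ?size_s // => /eqP; exact: val_inj.
by move=> i j; rewrite E ?size_s // /h_nat !valZpK.
Qed.

Variable vs : seq T.

(* Explicit branching instead of [has] and [&&]: [vm_compute] evaluates
   arguments eagerly, and this way it only explores extendable branches and
   stops at the first success. *)
Fixpoint grow_embedding (n : nat) (s : seq T) : bool :=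
  if n is n'.+1 then
    (fix first ws := if ws is v :: ws' then
       if extendable s v then (if grow_embedding n' (rcons s v) then true else first ws')
       else first ws'
     else false) vs
  else true.

Lemma grow_embeddingSE n s :
  grow_embedding n.+1 s = has (fun v => extendable s v && grow_embedding n (rcons s v)) vs.
Proof. by rewrite /=; elim: vs => //= v ws ->; case: extendable; case: grow_embedding. Qed.

Hypothesis vs_full : forall v, v \in vs.

Lemma grow_embeddingP n s : partial_embedding s ->
  reflect (exists2 t, size t = n & partial_embedding (s ++ t)) (grow_embedding n s).
Proof.
elim: n s => [|n IH] s ps; first by apply: ReflectT; exists [::]; rewrite ?cats0.
rewrite grow_embeddingSE; apply: (iffP hasP).
  move=> [v _ /andP[ext_v grow_v]].
  have ps_v : partial_embedding (rcons s v) by apply/partial_embedding_rcons.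
  have [t size_t ps_t] := IH _ ps_v grow_v.
  by exists (v :: t); rewrite /= ?size_t // -cat_rcons.
move=> [[//|v t] [size_t] ps_vt].
have ps_v : partial_embedding (rcons s v).
  by apply: (@partial_embedding_catl _ t); rewrite cat_rcons.
exists v; first exact: vs_full.
rewrite (proj2 (proj1 (partial_embedding_rcons s v) ps_v)).
by apply/IH => //; exists t; rewrite // cat_rcons.
Qed.

Definition has_inducedb : bool := grow_embedding k.+1 [::].

Lemma has_inducedP : reflect (has_induced h e) has_inducedb.
Proof.
apply: (iffP (grow_embeddingP _ partial_embedding_nil)) => [[t] | /has_induced_embeddingP[s]].
  by move=> size_t ps_t; apply/has_induced_embeddingP; exists t.
by exists s.
Qed.

End InducedSearch.

Lemma has_induced_transport k (h : rel 'I_k) (T T' : finType) (e : rel T) (e' : rel T')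
    (g : T -> T') :
  injective g -> (forall u v, e' (g u) (g v) = e u v) ->
  has_induced h e -> has_induced h e'.
Proof.
move=> inj_g e'_g [f [inj_f Ef]].
by exists (g \o f); split=> [|i j]; [exact: inj_comp | rewrite /= e'_g].
Qed.

Section EdgeTransport.

Variables (k : nat) (h : rel 'I_k) (T T' : finType) (e : rel T) (e' : rel T').
Variable g : T -> T'.
Hypotheses (inj_g : injective g) (e'_g : forall u v, e' (g u) (g v) = e u v).

Lemma has_induced_del_edge_transport x y :
  has_induced h (del_edge e x y) -> has_induced h (del_edge e' (g x) (g y)).
Proof.
apply: has_induced_transport inj_g _ => u v.
by rewrite /del_edge e'_g !(inj_eq inj_g).
Qed.

Lemma has_induced_add_edge_transport x y :
  has_induced h (add_edge e x y) -> has_induced h (add_edge e' (g x) (g y)).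
Proof.
apply: has_induced_transport inj_g _ => u v.
by rewrite /add_edge e'_g !(inj_eq inj_g).
Qed.

End EdgeTransport.

Lemma has_induced_del_edgeC k (h : rel 'I_k) (T : finType) (e : rel T) x y :
  has_induced h (del_edge e x y) -> has_induced h (del_edge e y x).
Proof. by apply: has_induced_transport (@inj_id T) _ => u v; rewrite /del_edge orbC. Qed.

Lemma has_induced_add_edgeC k (h : rel 'I_k) (T : finType) (e : rel T) x y :
  has_induced h (add_edge e x y) -> has_induced h (add_edge e y x).
Proof.
by apply: has_induced_transport (@inj_id T) _ => u v; rewrite /add_edge (orbC (_ && _)).
Qed.

Lemma val_subZp n (x y : 'I_n.+1) : x != y -> val (x - y)%R = n.+1 - val (y - x)%R.
Proof.
rewrite -subr_eq0 -opprB oppr_eq0; set a := (y - x)%R => a_neq0.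
have a_gt0 : 0 < val a by rewrite lt0n.
have -> : val (- a)%R = (n.+1 - a) %% n.+1 by [].
by rewrite modn_small // ltn_subrL a_gt0.
Qed.

Lemma Zp_pair_reduce n (P : 'I_n.+1 -> 'I_n.+1 -> Prop) :
  (forall x y, P x y -> P y x) ->
  (forall c x y, P x y -> P (c + x)%R (c + y)%R) ->
  (forall d : 'I_n.+1, 0 < d -> 2 * d <= n.+1 -> P 0%R d) ->
  forall x y, x != y -> P x y.
Proof.
move=> P_sym P_translate P_short x y.
wlog short : x y / 2 * val (y - x)%R <= n.+1 => [wlog_short x_neq_y | x_neq_y].
  have [short | long] := leqP (2 * val (y - x)%R) n.+1; first exact: wlog_short.
  apply/P_sym/wlog_short; last by rewrite eq_sym.
  rewrite val_subZp //; lia.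
rewrite -[x]addr0 -[y](subrKC x); apply/P_translate/P_short => //.
rewrite lt0n; apply: contra x_neq_y => /eqP d0.
by rewrite eq_sym -subr_eq0; apply/eqP/val_inj.
Qed.

Definition circulant20 : rel 'I_20 :=
  fun u v => val (v - u)%R \in [:: 1; 3; 4; 7; 9; 11; 13; 16; 17; 19].

Lemma circulant20_translate c u v : circulant20 (c + u)%R (c + v)%R = circulant20 u v.
Proof. by rewrite /circulant20 (addrC c v) addrKA. Qed.

(* Not [enum 'I_20], which is stuck under [vm_compute]: it goes through
   [insub], whose test [idP] is opaque. *)
Definition vertices20 : seq 'I_20 := [seq inZp i | i <- iota 0 20].

Lemma mem_vertices20 v : v \in vertices20.
Proof. by apply/mapP; exists (val v); rewrite ?valZpK // mem_iota ltn_ord. Qed.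

Definition has_P6b (e : rel 'I_20) : bool := has_inducedb (path_graph 6) e vertices20.

Lemma has_P6P e : reflect (has_induced (path_graph 6) e) (has_P6b e).
Proof. exact: (has_inducedP _ _ mem_vertices20). Qed.

Lemma circulant20_simple : simple_graph circulant20.
Proof.
have sym : all (fun u => all (fun v => circulant20 u v == circulant20 v u) vertices20)
               vertices20.
  by vm_compute.
split=> [u | u v]; first by rewrite /circulant20 subrr.
exact/eqP/(allP (allP sym u (mem_vertices20 u)) v (mem_vertices20 v)).
Qed.

Lemma circulant20_no_P6 : ~ has_induced (path_graph 6) circulant20.
Proof. by apply/has_P6P; vm_compute. Qed.

Lemma circulant20_del_edge x y :
  circulant20 x y -> has_induced (path_graph 6) (del_edge circulant20 x y).
Proof.
move=> xy; have x_neq_y : x != y.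
  by apply: contraTneq xy => ->; rewrite /circulant20 subrr.
move: x y x_neq_y xy; apply: Zp_pair_reduce => [x y IH yx | c x y IH | d d_gt0 d_short].
- by apply/has_induced_del_edgeC/IH; rewrite (proj2 circulant20_simple).
- rewrite circulant20_translate => /IH.
  apply: (has_induced_del_edge_transport _ (circulant20_translate c)).
  exact: addrI.
(* [if] rather than [==>], which would also search the excluded cases. *)
have short_edges : all (fun d : 'I_20 =>
    if [&& 0 < d, 2 * d <= 20 & circulant20 0%R d]
    then has_P6b (del_edge circulant20 0%R d) else true) vertices20.
  by vm_compute.
have := allP short_edges d (mem_vertices20 d); rewrite d_gt0 d_short !andTb => + d_edge.
by rewrite d_edge => /has_P6P.
Qed.

Lemma circulant20_add_edge x y :
  x != y -> ~~ circulant20 x y -> has_induced (path_graph 6) (add_edge circulant20 x y).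
Proof.
move: x y; apply: Zp_pair_reduce => [x y IH yx | c x y IH | d d_gt0 d_short].
- by apply/has_induced_add_edgeC/IH; rewrite (proj2 circulant20_simple).
- rewrite circulant20_translate => /IH.
  apply: (has_induced_add_edge_transport _ (circulant20_translate c)).
  exact: addrI.
have short_non_edges : all (fun d : 'I_20 =>
    if [&& 0 < d, 2 * d <= 20 & ~~ circulant20 0%R d]
    then has_P6b (add_edge circulant20 0%R d) else true) vertices20.
  by vm_compute.
have := allP short_non_edges d (mem_vertices20 d); rewrite d_gt0 d_short !andTb => + d_edge.
by rewrite d_edge => /has_P6P.
Qed.

Theorem theorem1 :
  exists (n : nat) (e : rel 'I_n),
    simple_graph e /\ (exists x y, e x y) /\ induced_saturated (path_graph 6) e.
Proof.
exists 20, circulant20; split; first exact: circulant20_simple.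
split; first by exists 0%R, 1%R.
split; [exact: circulant20_no_P6 | exact: circulant20_del_edge |].
exact: circulant20_add_edge.
Qed.
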